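(* Any averaging system (with weight threshold $\rho$) in which every $G_t$ has at most $m$ connected components can be interpreted as an $m$-twist system with the same $s$-energy. Specifically, at each time the blocks of the twist system are the index intervals of the agents spanned by the blocks of the embedded $G_t$, and the $s$-energy of the twist system equals that of the averaging system for all $s\in(0,1]$.
   Context: Averaging system: - $(G_t)_{t\ge0}$ are undirected graphs on $[n]$, each with self-loops at all vertices. - $P_t$ is row-stochastic with $(P_t)_{ij}>0$ iff $\{i,j\}$ is an edge of $G_t$, and all nonzero entries are $\ge\rho\in(0,1/2]$. - The dynamics is $x(t+1)=P_tx(t)$. - The blocks at time $t$ are the maximal intervals of the union of the closed intervals with endpoints $x_i(t),x_j(t)$ over edges $\{i,j\}$, $i\ne j$, of $G_t$. - The $s$-energy is $\sum_t\sum_{\text{blocks}}(\text{length})^s$. $m$-twist system (parameter $\rho$): at each time $t$, relabel the agents so that their positions satisfy $x_1\le\dots\le x_n$. A partition of $[n]$ into at most $m$ intervals of consecutive indices $[u_{t,l},v_{t,l}]$ (the blocks) is specified. The next positions, again sorted as $y_1\le\dots\le y_n$ (agents keep their ranks), are any positions satisfying, for every block $[u,v]$ and every $i\in[u,v]$, $$(1-\rho)x_u+\rho x_{\min\{i+1,v\}}\le y_i\le\rho x_{\max\{i-1,u\}}+(1-\rho)x_v.$$ The $s$-energy of a twist system is $\sum_{t\ge0}\sum_l\big(x_{v_{t,l}}(t)-x_{u_{t,l}}(t)\big)^s$. *)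

From HB Require Import structures.
From mathcomp Require Import all_boot all_order all_algebra.
From mathcomp Require Import all_classical all_reals all_analysis.
Set Implicit Arguments. Unset Strict Implicit. Unset Printing Implicit Defensive.
Import Order.TTheory GRing.Theory Num.Theory.
Local Open Scope ring_scope.

Section Defs.
Variable R : realType.

Definition avg_step_ok (n : nat) (rho : R) (G : rel 'I_n) (P : 'M[R]_n) : Prop :=
  [/\ (forall i, G i i) /\ (forall i j, G i j = G j i),
      (forall i j, 0 <= P i j),
      (forall i, \sum_(j < n) P i j = 1),
      (forall i j, (0 < P i j) = G i j) &
      (forall i j, P i j != 0 -> rho <= P i j)].

Definition in_edge_union (n : nat) (x : 'I_n -> R) (G : rel 'I_n) (y : R) : Prop :=
  exists i j, [/\ i != j, G i j &
    Num.min (x i) (x j) <= y <= Num.max (x i) (x j)].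

(* [a,b] is a block: a maximal interval of that union (such maximal
   intervals are closed since the union is a finite union of closed
   intervals). *)
Definition is_block (n : nat) (x : 'I_n -> R) (G : rel 'I_n) (a b : R) : Prop :=
  [/\ a <= b,
      (forall y, a <= y <= b -> in_edge_union x G y) &
      (forall c d, c <= a -> b <= d ->
         (forall y, c <= y <= d -> in_edge_union x G y) -> c = a /\ d = b)].

Definition avg_energy (n : nat) (s : R) (x : nat -> 'I_n -> R)
  (G : nat -> rel 'I_n) : \bar R :=
  (\sum_(0 <= t <oo)
     \esum_(p in [set p : R * R | is_block (x t) (G t) p.1 p.2])
        ((p.2 - p.1) `^ s)%:E)%E.

(* sorted positions x_1 <= ... <= x_n (as a sequence indexed from 0) *)
Definition sorted_pos (n : nat) (x : 'I_n -> R) : seq R :=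
  sort <=%R [seq x i | i <- enum 'I_n].

Definition twist_partition (n m : nat) (B : seq (nat * nat)) : Prop :=
  [/\ (size B <= m)%N,
      (forall p, p \in B -> (p.1 <= p.2 < n)%N) &
      (forall k, (k < n)%N -> count (fun p : nat * nat => (p.1 <= k <= p.2)%N) B = 1%N)].

Definition twist_step (rho : R) (B : seq (nat * nat)) (x y : seq R) : Prop :=
  forall p, p \in B -> forall i, (p.1 <= i <= p.2)%N ->
    (1 - rho) * x`_p.1 + rho * x`_(minn i.+1 p.2) <= y`_i /\
    y`_i <= rho * x`_(maxn i.-1 p.1) + (1 - rho) * x`_p.2.

Definition twist_system (n m : nat) (rho : R) (z : nat -> seq R)
  (B : nat -> seq (nat * nat)) : Prop :=
  forall t, [/\ size (z t) = n, sorted <=%R (z t), twist_partition n m (B t) &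
                twist_step rho (B t) (z t) (z t.+1)].

Definition twist_energy (s : R) (z : nat -> seq R) (B : nat -> seq (nat * nat)) : \bar R :=
  (\sum_(0 <= t <oo)
     (\sum_(p <- B t) ((z t)`_p.2 - (z t)`_p.1) `^ s)%:E)%E.

End Defs.

From HB Require Import structures.
From mathcomp Require Import all_boot all_order all_algebra.
From mathcomp Require Import all_classical all_reals all_analysis.
From mathcomp Require Import zify lra.
Import Order.TTheory GRing.Theory Num.Theory.
Local Open Scope ring_scope.
Set Implicit Arguments. Unset Strict Implicit.

(* The ends of a block are barriers that no edge crosses, so a block
   is a union of connected components of G_t and the agents it contains have an interval
   of ranks; with singleton ranks for the agents outside every block these intervals
   partition the ranks, and there are at most as many of them as components.  Inside a
   rank interval [u, v] every agent moves to a convex combination of neighbours lying in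
   [z_u, z_v], with weight at least rho on each, so counting agents on either side of a
   threshold gives the twist inequalities for the new order statistics; a gap
   z_i < z_(i+1) inside a block is bridged by an edge, which supplies the one extra agent
   needed.  Blocks correspond to the non-singleton intervals with the same lengths, and
   singletons contribute 0^s = 0. *)

Section SortedCount.
Variable R : realDomainType.
Implicit Types (y : seq R) (a b : R).

Lemma sorted_count_prefix (p : pred R) y k : sorted <=%R y ->
  (forall a b, a <= b -> p b -> p a) -> (k < size y)%N ->
  (k < count p y)%N = p y`_k.
Proof.
move=> + p_down; elim: y k => [|r y IH] k //= y_sorted k_lt.
have r_min := order_path_min le_trans y_sorted.
have count0 : ~~ p r -> count p y = 0%N.
  move=> pr; apply/eqP; rewrite -leqn0 leqNgt -has_count.
  by apply/hasP => -[t /(allP r_min) le_rt pt]; rewrite (p_down _ _ le_rt pt) in pr.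
case: k k_lt => [|k] k_lt /=; first by case: (boolP (p r)) => //= pr; rewrite count0.
have [pr|pr] /= := boolP (p r); first by rewrite add1n ltnS IH // (path_sorted y_sorted).
rewrite add0n count0 //; apply/esym/negbTE; apply: contra pr; apply: p_down.
exact: (all_nthP 0 r_min).
Qed.

Lemma sorted_nth_le y k b : sorted <=%R y -> (k < size y)%N ->
  (y`_k <= b) = (k < count (fun r => (r <= b)%R) y)%N.
Proof. by move=> ys kn; rewrite sorted_count_prefix // => c d cd /(le_trans cd). Qed.

Lemma sorted_nth_ge y k a : sorted <=%R y -> (k < size y)%N ->
  (a <= y`_k) = (count (fun r => (r < a)%R) y <= k)%N.
Proof.
by move=> ys kn; rewrite leNgt leqNgt sorted_count_prefix // => c d cd /(le_lt_trans cd).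
Qed.

End SortedCount.

Lemma card_count (T : finType) (a : pred T) : #|a| = count a (enum T).
Proof. by rewrite cardE enumT -size_filter. Qed.

Lemma count_eq1 (T : eqType) (a : pred T) s : uniq s -> has a s ->
  {in s &, forall p q, a p -> a q -> p = q} -> count a s = 1%N.
Proof.
move=> s_uniq /hasP [p ps ap] a_inj; rewrite -size_filter; apply/eqP; rewrite eqn_leq.
apply/andP; split; last by rewrite size_filter -has_count; apply/hasP; exists p.
apply: (@uniq_leq_size _ _ [:: p] (filter_uniq _ s_uniq)) => q; rewrite mem_filter inE.
by case/andP => aq qs; apply/eqP/a_inj.
Qed.

Section SortedPositions.
Variables (R : realType) (n : nat) (x : 'I_n -> R).
Local Notation z := (sorted_pos x).

Lemma size_sorted_pos : size z = n.
Proof. by rewrite size_sort size_map size_enum_ord. Qed.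

Lemma sorted_pos_sorted : sorted <=%R z.
Proof. exact/sort_sorted/le_total. Qed.

Lemma count_sorted_pos (p : pred R) : count p z = #|[pred j | p (x j)]|.
Proof.
have /permP -> : perm_eq z [seq x j | j <- enum 'I_n] by rewrite perm_sort.
by rewrite count_map card_count.
Qed.

Lemma mem_sorted_pos j : x j \in z.
Proof. by rewrite mem_sort map_f ?mem_enum. Qed.

Lemma le_sorted_pos i j : (i <= j)%N -> (j < n)%N -> z`_i <= z`_j.
Proof.
move=> le_ij lt_jn; apply: (sorted_leq_nth le_trans lexx 0 sorted_pos_sorted);
by rewrite ?inE ?size_sorted_pos // (leq_ltn_trans le_ij).
Qed.

Lemma sorted_pos_le k b : (k < n)%N -> (z`_k <= b) = (k < #|[pred j | (x j <= b)%R]|)%N.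
Proof.
by move=> kn; rewrite sorted_nth_le ?count_sorted_pos ?size_sorted_pos ?sorted_pos_sorted.
Qed.

Lemma sorted_pos_ge k a : (k < n)%N -> (a <= z`_k) = (#|[pred j | (x j < a)%R]| <= k)%N.
Proof.
by move=> kn; rewrite sorted_nth_ge ?count_sorted_pos ?size_sorted_pos ?sorted_pos_sorted.
Qed.

Lemma sorted_pos_gap j k : (k.+1 < n)%N ->
  (x j < z`_k.+1 -> x j <= z`_k) /\ (z`_k < x j -> z`_k.+1 <= x j).
Proof.
move=> kn; have /(nthP 0) [m mn <-] := mem_sorted_pos j.
rewrite size_sorted_pos in mn; split => lt_zm.
  apply: le_sorted_pos; last lia.
  by rewrite leqNgt; apply: contraTN lt_zm => km; rewrite -leNgt le_sorted_pos.
apply: le_sorted_pos => //; rewrite ltnNge; apply: contraTN lt_zm => mk.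
by rewrite -leNgt le_sorted_pos //; lia.
Qed.

Definition agents_by_pos := sort (relpre x <=%R) (enum 'I_n).

Lemma agents_by_pos_uniq : uniq agents_by_pos.
Proof. by rewrite sort_uniq enum_uniq. Qed.

Lemma size_agents_by_pos : size agents_by_pos = n.
Proof. by rewrite size_sort size_enum_ord. Qed.

Lemma pos_agents_by_pos j0 k : (k < n)%N -> x (nth j0 agents_by_pos k) = z`_k.
Proof. by move=> kn; rewrite /sorted_pos sort_map (nth_map j0) ?size_agents_by_pos. Qed.

End SortedPositions.

Section EdgeUnion.
Variables (R : realType) (n : nat) (G : rel 'I_n) (x : 'I_n -> R).
Hypothesis G_sym : forall i j, G i j = G j i.
Local Notation U := (in_edge_union x G).

Definition edge_unionb (y : R) := [exists i, exists j, [&& i != j, G i j &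
  Num.min (x i) (x j) <= y <= Num.max (x i) (x j)]].

Lemma edge_unionP y : reflect (U y) (edge_unionb y).
Proof.
apply: (iffP existsP) => [[i /existsP [j /and3P [ij Gij yij]]]|[i [j [ij Gij yij]]]].
  by exists i, j.
by exists i; apply/existsP; exists j; apply/and3P.
Qed.

Definition union_covers (c d : R) := forall y, c <= y <= d -> U y.

Lemma edge_covers i j y : i != j -> G i j -> x i <= y <= x j -> U y.
Proof.
by move=> ij Gij /andP [xi xj]; exists i, j; rewrite ge_min le_max xi xj orbT.
Qed.

Lemma edge_union_oriented y : U y ->
  exists i j, [/\ i != j, G i j, x i <= y & y <= x j].
Proof.
move=> [i [j [ij Gij /andP []]]]; case: (leP (x i) (x j)) => _ yi jy; first by exists i, j.
by exists j, i; rewrite eq_sym G_sym.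
Qed.

Lemma union_covers_cat a b c : union_covers a b -> union_covers b c -> union_covers a c.
Proof.
move=> cov_ab cov_bc y /andP [ay yc]; case: (leP y b) => [yb|/ltW by_].
  by apply: cov_ab; rewrite ay yb.
by apply: cov_bc; rewrite by_ yc.
Qed.

(* The witness is the left end of an edge interval through the midpoint of [c, a]. *)
Lemma union_covers_left c d a y : union_covers c d -> c < a -> a <= y <= d ->
  exists i, x i < a /\ union_covers (x i) y.
Proof.
move=> cov ca /andP [ay yd]; pose q := (c + a) / 2.
have cq : c <= q by rewrite /q; lra.
have qa : q < a by rewrite /q; lra.
have /edge_union_oriented [i [j [ij Gij iq qj]]] : U q.
  by apply: cov; rewrite cq (le_trans (ltW qa)) // (le_trans ay).
exists i; split; first exact: le_lt_trans iq qa.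
apply: union_covers_cat (_ : union_covers (x i) q) _.
  by move=> p /andP [ip pq]; apply: (edge_covers ij Gij); rewrite ip (le_trans pq).
by move=> p /andP [qp py]; apply: cov; rewrite (le_trans cq) //= (le_trans py).
Qed.

Lemma union_covers_right c d b y : union_covers c d -> b < d -> c <= y <= b ->
  exists j, b < x j /\ union_covers y (x j).
Proof.
move=> cov bd /andP [cy yb]; pose q := (b + d) / 2.
have qd : q <= d by rewrite /q; lra.
have bq : b < q by rewrite /q; lra.
have /edge_union_oriented [i [j [ij Gij iq qj]]] : U q.
  by apply: cov; rewrite qd (le_trans cy) // (le_trans yb) // ltW.
exists j; split; first exact: lt_le_trans bq qj.
apply: union_covers_cat (_ : union_covers y q) _.
  by move=> p /andP [yp pq]; apply: cov; rewrite (le_trans cy) //= (le_trans pq).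
by move=> p /andP [qp pj]; apply: (edge_covers ij Gij); rewrite pj (le_trans iq).
Qed.

Definition closed_above (a : R) := forall i j, G i j -> a <= x j -> a <= x i.
Definition closed_below (b : R) := forall i j, G i j -> x j <= b -> x i <= b.

Lemma closed_between a b : closed_above a -> closed_below b ->
  fingraph.closed G [pred i | a <= x i <= b].
Proof.
move=> above below i j Gij; rewrite !inE; have Gji : G j i by rewrite G_sym.
by apply/andP/andP => -[ai ib]; split; [apply: above Gji ai | apply: below Gji ib
  | apply: above Gij ai | apply: below Gij ib].
Qed.

Lemma uncovered_closed_above y : ~ U y -> closed_above y.
Proof.
move=> yU i j Gij yj; rewrite leNgt; apply/negP => iy; apply: yU.
have ij : i != j by apply: contraTneq iy => ->; rewrite -leNgt.
by apply: (edge_covers ij Gij); rewrite yj ltW.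
Qed.

Lemma uncovered_closed_below y : ~ U y -> closed_below y.
Proof.
move=> yU i j Gij jy; rewrite leNgt; apply/negP => yi; apply: yU.
have ji : j != i by apply: contraTneq yi => <-; rewrite -leNgt.
by apply: (edge_covers ji); rewrite 1?G_sym // jy ltW.
Qed.

Lemma uncovered_closed1 j : ~ U (x j) -> fingraph.closed G (pred1 j).
Proof.
move=> jU i k Gik; rewrite !inE.
case: (eqVneq i j) Gik => [-> Gjk|ij Gik].
  case: (eqVneq k j) => // kj; case: jU.
  by exists j, k; rewrite eq_sym kj Gjk ge_min le_max !lexx.
case: (eqVneq k j) Gik => // -> Gij; case: jU.
by exists i, j; rewrite ij Gij ge_min le_max !lexx !orbT.
Qed.

Section Block.
Variables a b : R.
Hypothesis blk : is_block x G a b.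

Lemma block_le : a <= b. Proof. by case: blk. Qed.

Lemma block_covers : union_covers a b. Proof. by case: blk. Qed.

Lemma block_maximal c d : c <= a -> b <= d -> union_covers c d -> c = a /\ d = b.
Proof. by case: blk => _ _; apply. Qed.

Lemma block_closed_above : closed_above a.
Proof.
move=> i j Gij aj; rewrite leNgt; apply/negP => ia.
have ij : i != j by apply: contraTneq ia => ->; rewrite -leNgt.
have [/eqP + _] : x i = a /\ b = b.
  apply: block_maximal (ltW ia) (lexx b) _; apply: union_covers_cat block_covers.
  by move=> p /andP [ip pa]; apply: (edge_covers ij Gij); rewrite ip (le_trans pa).
by rewrite lt_eqF.
Qed.

Lemma block_closed_below : closed_below b.
Proof.
move=> i j Gij jb; rewrite leNgt; apply/negP => bi.
have ji : j != i by apply: contraTneq bi => <-; rewrite -leNgt.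
have [_ /eqP] : a = a /\ x i = b.
  apply: block_maximal (lexx a) (ltW bi) _; apply: union_covers_cat block_covers _.
  move=> p /andP [bp pi]; apply: (edge_covers ji); first by rewrite G_sym.
  by rewrite pi (le_trans jb).
by rewrite gt_eqF.
Qed.

Lemma block_left_end : exists i, x i = a.
Proof.
have /edge_union_oriented [i [j [ij Gij ia aj]]] : U a.
  by apply: block_covers; rewrite lexx block_le.
by exists i; apply/eqP; rewrite eq_le ia (block_closed_above Gij aj).
Qed.

Lemma block_right_end : exists j, x j = b.
Proof.
have /edge_union_oriented [i [j [ij Gij ib bj]]] : U b.
  by apply: block_covers; rewrite lexx block_le.
exists j; apply/eqP; rewrite eq_le bj andbT (block_closed_below _ ib) //.
by rewrite G_sym.
Qed.

End Block.

(* The block through y runs from the leftmost to the rightmost agent position joined to y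
   by a covered interval; the finitely many agents make these extrema exist. *)
Lemma exists_block y : U y -> exists a b, is_block x G a b /\ a <= y <= b.
Proof.
move=> /edge_union_oriented [i0 [j0 [ij0 Gij0 i0y yj0]]].
pose reach_left i := `[< x i <= y /\ union_covers (x i) y >].
pose reach_right j := `[< y <= x j /\ union_covers y (x j) >].
have left0 : reach_left i0.
  apply/asboolP; split => // p /andP [ip py].
  by apply: (edge_covers ij0 Gij0); rewrite ip (le_trans py).
have right0 : reach_right j0.
  apply/asboolP; split => // p /andP [yp pj].
  by apply: (edge_covers ij0 Gij0); rewrite pj (le_trans i0y).
case: (arg_minP x left0) => ia /asboolP [iay cov_a] a_min.
case: (arg_maxP x right0) => ib /asboolP [yib cov_b] b_max.
exists (x ia), (x ib); split; last by rewrite iay yib.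
split; [exact: le_trans yib | exact: union_covers_cat cov_b|].
move=> c d ca bd cov; split; apply/eqP.
  rewrite eq_le ca leNgt; apply/negP => c_lt.
  have y_d : x ia <= y <= d by rewrite iay (le_trans yib bd).
  have [i [ia' cov_i]] := union_covers_left cov c_lt y_d.
  have left_i : reach_left i by apply/asboolP; split => //; exact: le_trans (ltW ia') iay.
  by have := a_min i left_i; rewrite leNgt ia'.
rewrite eq_le bd andbT leNgt; apply/negP => d_gt.
have [j [bj cov_j]] := union_covers_right cov d_gt (introT andP (conj (le_trans ca iay) yib)).
have right_j : reach_right j by apply/asboolP; split => //; exact: le_trans yib (ltW bj).
by have /= := b_max j right_j; rewrite leNgt bj.
Qed.

Lemma block_unique a b a' b' y : is_block x G a b -> is_block x G a' b' ->
  a <= y <= b -> a' <= y <= b' -> a = a' /\ b = b'.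
Proof.
move=> blk blk' /andP [ay yb] /andP [ay' yb'].
have cov : union_covers (Num.min a a') (Num.max b b').
  move=> p /andP []; rewrite ge_min le_max => ap pb.
  case: (leP p y) => [py|/ltW yp].
    by case/orP: ap => ap; [apply: (block_covers blk) | apply: (block_covers blk')];
      rewrite ap (le_trans py).
  by case/orP: pb => pb; [apply: (block_covers blk) | apply: (block_covers blk')];
    rewrite pb andbT (le_trans _ yp).
have min_a : Num.min a a' <= a by rewrite ge_min lexx.
have min_a' : Num.min a a' <= a' by rewrite ge_min lexx orbT.
have max_b : b <= Num.max b b' by rewrite le_max lexx.
have max_b' : b' <= Num.max b b' by rewrite le_max lexx orbT.
have [Ea Eb] := block_maximal blk min_a max_b cov.
have [Ea' Eb'] := block_maximal blk' min_a' max_b' cov.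
by split; [exact: etrans (esym Ea) Ea' | exact: etrans (esym Eb) Eb'].
Qed.

End EdgeUnion.

Section TwistBlocks.
Variables (R : realType) (n : nat) (G : rel 'I_n) (x : 'I_n -> R).
Hypothesis G_sym : forall i j, G i j = G j i.
Local Notation U := (in_edge_union x G).
Local Notation z := (sorted_pos x).

(* The interval of ranks of the agents lying in [a, b]. *)
Definition block_index (a b : R) : nat * nat :=
  (#|[pred j | x j < a]|, #|[pred j | x j <= b]|.-1).

Lemma block_indexP a b : is_block x G a b ->
  let p := block_index a b in
  [/\ (p.1 <= p.2)%N, (p.2 < n)%N, z`_p.1 = a, z`_p.2 = b &
      forall k, (k < n)%N -> (p.1 <= k <= p.2)%N = (a <= z`_k <= b)].
Proof.
move=> blk /=; set u := #|_|; set w := #|_|.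
have [ia xia] := block_left_end G_sym blk; have [ib xib] := block_right_end G_sym blk.
have /(nthP 0) [ma ma_n zma] := mem_sorted_pos x ia.
have /(nthP 0) [mb mb_n zmb] := mem_sorted_pos x ib.
rewrite size_sorted_pos in ma_n mb_n; rewrite xia in zma; rewrite xib in zmb.
have u_ma : (u <= ma)%N by rewrite -sorted_pos_ge // zma.
have mb_w : (mb < w)%N by rewrite -sorted_pos_le // zmb.
have w_n : (w <= n)%N by rewrite -[n]card_ord max_card.
have rank_in k : (k < n)%N -> (u <= k <= w.-1)%N = (a <= z`_k <= b).
  by move=> kn; rewrite sorted_pos_ge // sorted_pos_le // -/u -/w; congr andb; lia.
have zu : z`_u = a.
  apply/eqP; rewrite eq_le -zma le_sorted_pos //= zma sorted_pos_ge -/u; lia.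
have zw : z`_w.-1 = b.
  have mb_w' : (mb <= w.-1)%N by lia.
  apply/eqP; rewrite eq_le sorted_pos_le -/w; last lia.
  by rewrite -{1}zmb le_sorted_pos ?andbT //; lia.
split => //; [|lia].
by have := rank_in u; rewrite zu lexx (block_le blk) leqnn; apply; lia.
Qed.

Definition is_block_index (p : nat * nat) :=
  exists a b, is_block x G a b /\ p = block_index a b.

Definition twist_block (p : nat * nat) :=
  `[< is_block_index p >] || (p.1 == p.2) && ~~ edge_unionb G x z`_p.1.

Definition twist_blocks :=
  [seq p <- [seq (u, v) | u <- iota 0 n, v <- iota 0 n] | twist_block p].

Lemma mem_twist_blocks p :
  (p \in twist_blocks) = [&& twist_block p, (p.1 < n)%N & (p.2 < n)%N].
Proof.
rewrite mem_filter; congr andb; apply/allpairsP/andP => [[[u v] /= [+ + ->]]|[pn qn]].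
  by rewrite !mem_iota.
by exists (p.1, p.2); rewrite !mem_iota -surjective_pairing.
Qed.

Lemma twist_blocks_uniq : uniq twist_blocks.
Proof. by rewrite filter_uniq // allpairs_uniq ?iota_uniq // => -[? ?] [? ?]. Qed.

Lemma twist_blocksP p : p \in twist_blocks ->
  (exists a b, is_block x G a b /\ p = block_index a b) \/
  [/\ p.1 = p.2, (p.1 < n)%N & ~ U z`_p.1].
Proof.
rewrite mem_twist_blocks => /and3P [+ p1n _].
case/orP => [/asboolP blk | /andP [/eqP p12 /edge_unionP pU]]; first by left.
by right; split.
Qed.

Lemma block_index_twist_blocks a b : is_block x G a b -> block_index a b \in twist_blocks.
Proof.
move=> blk; have [le12 p2n _ _ _] := block_indexP blk.
rewrite mem_twist_blocks p2n (leq_ltn_trans le12 p2n) andbT /twist_block.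
by rewrite (asboolT (_ : is_block_index _)) //; exists a, b.
Qed.

Lemma twist_block_bounds p : p \in twist_blocks -> (p.1 <= p.2 < n)%N.
Proof.
case/twist_blocksP => [[a [b [blk ->]]]|[-> p2n _]]; last by rewrite leqnn.
by case: (block_indexP blk) => -> ->.
Qed.

Lemma twist_blocks_cover k : (k < n)%N ->
  exists2 p, p \in twist_blocks & (p.1 <= k <= p.2)%N.
Proof.
move=> kn; have [/edge_unionP/(exists_block G_sym) [a [b [blk zk]]]|zkU] :=
  boolP (edge_unionb G x z`_k).
  exists (block_index a b); first exact: block_index_twist_blocks.
  by have [_ _ _ _ ->] := block_indexP blk.
exists (k, k); rewrite /= ?leqnn // mem_twist_blocks /twist_block /= kn eqxx zkU.
by rewrite orbT.
Qed.

Lemma twist_blocks_disjoint p q k : p \in twist_blocks -> q \in twist_blocks ->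
  (k < n)%N -> (p.1 <= k <= p.2)%N -> (q.1 <= k <= q.2)%N -> p = q.
Proof.
move=> + + kn; case/twist_blocksP => [[a [b [blk ->]]]|[p12 _ pU]];
case/twist_blocksP => [[a' [b' [blk' ->]]]|[q12 _ qU]].
- have [_ _ _ _ -> //] := block_indexP blk; have [_ _ _ _ -> //] := block_indexP blk'.
  by move=> kab ka'b'; have [-> ->] := block_unique blk blk' kab ka'b'.
- have [_ _ _ _ -> //] := block_indexP blk; rewrite -q12 -eqn_leq => kab /eqP qk.
  by case: qU; rewrite qk; apply: (block_covers blk).
- have [_ _ _ _ -> //] := block_indexP blk'; rewrite -p12 -eqn_leq => /eqP pk kab.
  by case: pU; rewrite pk; apply: (block_covers blk').
- rewrite -p12 -q12 -!eqn_leq => /eqP pk /eqP qk.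
  by rewrite [p]surjective_pairing [q]surjective_pairing -p12 -q12 pk qk.
Qed.

Lemma count_twist_blocks k : (k < n)%N ->
  count (fun p : nat * nat => (p.1 <= k <= p.2)%N) twist_blocks = 1%N.
Proof.
move=> kn; apply: count_eq1 twist_blocks_uniq _ _.
  by have [p ??] := twist_blocks_cover kn; apply/hasP; exists p.
by move=> p q pB qB; apply: twist_blocks_disjoint.
Qed.

Lemma twist_block_closed p : p \in twist_blocks ->
  closed_above G x z`_p.1 /\ closed_below G x z`_p.2.
Proof.
case/twist_blocksP => [[a [b [blk ->]]]|[<- _ pU]].
  have [_ _ -> -> _] := block_indexP blk.
  exact: (conj (block_closed_above blk) (block_closed_below G_sym blk)).
exact: (conj (uncovered_closed_above pU) (uncovered_closed_below G_sym pU)).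
Qed.

Definition gaps_bridged (u v : nat) := forall k, (u <= k < v)%N -> z`_k < z`_k.+1 ->
  exists i j, [/\ G i j, x i <= z`_k & z`_k.+1 <= x j].

Lemma twist_block_gaps p : p \in twist_blocks -> gaps_bridged p.1 p.2.
Proof.
case/twist_blocksP => [[a [b [blk ->]]]|[-> _ _] k]; last by rewrite ltnNge andbN.
have [_ p2n za zb _] := block_indexP blk; move: p2n za zb.
set u := _.1; set v := _.2 => vn za zb k /andP [uk kv] zk.
have k1n : (k.+1 < n)%N := leq_ltn_trans kv vn.
pose q := (z`_k + z`_k.+1) / 2.
have /(edge_union_oriented G_sym) [i [j [_ Gij iq qj]]] : U q.
  apply: (block_covers blk); rewrite -za -zb; apply/andP; split.
    by apply: le_trans (le_sorted_pos x uk (ltnW k1n)) _; rewrite /q; lra.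
  by apply: le_trans (le_sorted_pos x kv vn); rewrite /q; lra.
have [gap_below _] := sorted_pos_gap x i k1n.
have [_ gap_above] := sorted_pos_gap x j k1n.
rewrite /q in iq qj; exists i, j; split; first exact: Gij.
  by apply: gap_below; lra.
by apply: gap_above; lra.
Qed.

Section Components.
Variable j0 : 'I_n.
Local Notation agent k := (nth j0 (agents_by_pos x) k).

(* Blocks are unions of components since their ends are barriers; singletons are isolated. *)
Lemma twist_blocks_connect p q : p \in twist_blocks -> q \in twist_blocks ->
  connect G (agent p.1) (agent q.1) -> p = q.
Proof.
move=> pB qB; have /andP [p12 p2n] := twist_block_bounds pB.
have /andP [q12 q2n] := twist_block_bounds qB.
have p1n := leq_ltn_trans p12 p2n; have q1n := leq_ltn_trans q12 q2n.
have q_q1 : (q.1 <= q.1 <= q.2)%N by rewrite leqnn.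
case/twist_blocksP: (pB) => [[a [b [blk p_ab]]]|[_ _ pU]] conn.
  have := closed_connect (closed_between G_sym (block_closed_above blk)
    (block_closed_below G_sym blk)) conn.
  have [_ _ za _ rank] := block_indexP blk; rewrite -p_ab in za rank.
  rewrite !inE !pos_agents_by_pos // za lexx (block_le blk) -rank // => /esym p_q1.
  exact: twist_blocks_disjoint pB qB q1n p_q1 q_q1.
have ap_iso : ~ U (x (agent p.1)) by rewrite pos_agents_by_pos.
have := closed_connect (uncovered_closed1 ap_iso) conn; rewrite !inE eqxx => /esym.
rewrite nth_uniq ?size_agents_by_pos ?agents_by_pos_uniq // => /eqP q1p1.
by apply: (twist_blocks_disjoint pB qB p1n); rewrite ?leqnn // -q1p1.
Qed.

End Components.

Lemma size_twist_blocks : (size twist_blocks <= n_comp G predT)%N.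
Proof.
have [n0|n_gt0] := posnP n.
  have nn0 : (n * n = 0)%N by rewrite n0.
  by rewrite size_filter (leq_trans (count_size _ _)) // size_allpairs size_iota nn0.
pose rep (p : nat * nat) := fingraph.root G (nth (Ordinal n_gt0) (agents_by_pos x) p.1).
have G_csym : connect_sym G := sym_connect_sym G_sym.
have rep_uniq : uniq (map rep twist_blocks).
  rewrite map_inj_in_uniq ?twist_blocks_uniq // => p q pB qB /eqP.
  by rewrite root_connect //; apply: twist_blocks_connect.
rewrite /n_comp_mem -(size_map rep) -(card_uniqP rep_uniq); apply: subset_leq_card.
apply/fintype.subsetP => r /mapP [p _ ->]; rewrite !inE /= andbT.
by rewrite /rep /fingraph.roots /= root_root.
Qed.

Local Open Scope ereal_scope.
Local Open Scope classical_set_scope.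

(* Singleton twist blocks have length 0, and [0 `^ s = 0] needs [s != 0]. *)
Lemma esum_blocks (s : R) : s != 0%R ->
  \esum_(q in [set q : R * R | is_block x G q.1 q.2]) ((q.2 - q.1) `^ s)%:E =
  (\sum_(p <- twist_blocks) (z`_p.2 - z`_p.1) `^ s)%:E.
Proof.
move=> s_neq0; pose B := [seq p <- twist_blocks | `[< is_block_index p >]].
pose ends (p : nat * nat) := (z`_p.1, z`_p.2).
have B_ends p : p \in B ->
    exists a b, [/\ is_block x G a b, p = block_index a b & ends p = (a, b)].
  rewrite mem_filter => /andP [/asboolP [a [b [blk ->]]] _]; exists a, b; split => //.
  by rewrite /ends; have [_ _ -> -> _] := block_indexP blk.
have blocksE : [set q : R * R | is_block x G q.1 q.2] = ends @` [set` B].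
  apply/seteqP; split => [[a b] /= blk|_ [p /B_ends [a [b [blk _ ->]]] <-] //].
  exists (block_index a b); last by rewrite /ends; have [_ _ -> -> _] := block_indexP blk.
  rewrite /= mem_filter block_index_twist_blocks // andbT.
  by apply/asboolP; exists a, b.
have ends_inj : set_inj [set` B] ends.
  move=> p q; rewrite !inE /= => /B_ends [a [b [_ -> ->]]] /B_ends [a' [b' [_ -> ->]]].
  by case=> -> ->.
have B_uniq : uniq B by apply: filter_uniq twist_blocks_uniq.
have pow_ge0 p : p \in [set` B] -> 0 <= (((ends p).2 - (ends p).1) `^ s)%R%:E.
  by rewrite lee_fin powR_ge0.
rewrite blocksE esum_image // esum_fset //; last exact: finite_seq.
rewrite -fsbig_seq // sumEFin big_filter big_mkcond /=; congr _%:E.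
apply: eq_big_seq => p pB; case: ifPn => // /asboolPn not_block.
case/twist_blocksP: pB => [[a [b [blk p_ab]]]|[-> _ _]]; last by rewrite subrr powR0.
by case: not_block; exists a, b.
Qed.

End TwistBlocks.

Section AveragingStep.
Variables (R : realType) (n : nat) (rho : R) (G : rel 'I_n) (P : 'M[R]_n).
Hypothesis step_ok : avg_step_ok rho G P.
Hypothesis rho_gt0 : 0 < rho.

Lemma avg_lower_bound (x : 'I_n -> R) a j k : (forall l, G j l -> a <= x l) ->
  G j k -> a <= x k -> (1 - rho) * a + rho * x k <= \sum_(l < n) P j l * x l.
Proof.
case: step_ok => _ P_ge0 P_sum P_gt0 P_rho above_a Gjk ak.
have shift : \sum_(l < n) P j l * (x l - a) = \sum_(l < n) P j l * x l - a.
  by under eq_bigr do rewrite mulrBr; rewrite sumrB -mulr_suml P_sum mul1r.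
have term_ge0 l : 0 <= P j l * (x l - a).
  have [Gjl|nGjl] := boolP (G j l).
    by apply: mulr_ge0; [exact: P_ge0 | rewrite subr_ge0 above_a].
  have -> : P j l = 0 by apply/eqP; rewrite eq_le P_ge0 andbT leNgt P_gt0.
  by rewrite mul0r.
have rho_le : rho * (x k - a) <= P j k * (x k - a).
  by rewrite ler_wpM2r ?subr_ge0 // P_rho // gt_eqF // P_gt0.
have : P j k * (x k - a) <= \sum_(l < n) P j l * (x l - a).
  by rewrite (bigD1 k) //= lerDl sumr_ge0.
lra.
Qed.

Lemma avg_upper_bound (x : 'I_n -> R) b j k : (forall l, G j l -> x l <= b) ->
  G j k -> x k <= b -> \sum_(l < n) P j l * x l <= (1 - rho) * b + rho * x k.
Proof.
move=> below_b Gjk kb.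
have above_b l : G j l -> - b <= - x l by rewrite lerN2; apply: below_b.
have := avg_lower_bound above_b Gjk; rewrite lerN2 => /(_ kb).
under eq_bigr => l _ do rewrite mulrN.
rewrite sumrN; lra.
Qed.

End AveragingStep.

Section TwistStep.
Variables (R : realType) (n : nat) (rho : R) (G : rel 'I_n) (P : 'M[R]_n).
Variable x : 'I_n -> R.
Hypothesis step_ok : avg_step_ok rho G P.
Hypothesis rho_gt0 : 0 < rho.
Local Notation z := (sorted_pos x).
Local Notation y := (fun i => \sum_(j < n) P i j * x j).

Let G_refl j : G j j. Proof. by case: step_ok => -[]. Qed.
Let G_sym j k : G j k = G k j. Proof. by case: step_ok => -[]. Qed.

Lemma twist_step_lower u v i : (u <= i <= v)%N -> (v < n)%N ->
  closed_above G x z`_u -> gaps_bridged G x u v ->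
  (1 - rho) * z`_u + rho * z`_(minn i.+1 v) <= (sorted_pos y)`_i.
Proof.
(* Every agent at or above z_c, and across a gap the lower end of a bridging edge,
   ends at or above L; hence at most i agents end below L. *)
move=> /andP [ui iv] vn above gaps; set c := minn i.+1 v; set L := _ + _.
have uc : (u <= c)%N by rewrite /c; lia.
have i_n : (i < n)%N by lia.
have c_n : (c < n)%N by rewrite /c; lia.
have next_ge j k : G j k -> z`_c <= x k -> L <= y j.
  move=> Gjk ck; have uk := le_trans (le_sorted_pos x uc c_n) ck.
  have uj : z`_u <= x j by apply: above Gjk uk.
  have nbrs l : G j l -> z`_u <= x l by rewrite G_sym => /above; apply.
  have := avg_lower_bound step_ok nbrs Gjk uk.
  have : rho * z`_c <= rho * x k by rewrite ler_pM2l.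
  rewrite /L; lra.
have sub : [pred j | y j < L] \subset [pred j | x j < z`_c].
  apply/fintype.subsetP => j; rewrite !inE; apply: contraTT; rewrite -!leNgt.
  exact: next_ge (G_refl j).
have card_c : (#|[pred j | (x j < z`_c)%R]| <= c)%N by rewrite -sorted_pos_ge.
rewrite sorted_pos_ge ?size_sorted_pos //.
have [lt_iv|le_vi] := ltnP i v; last first.
  by apply: leq_trans (subset_leq_card sub) _; rewrite -(_ : c = i) //; lia.
have c_eq : c = i.+1 by apply/minn_idPl.
have [z_eq|z_neq] := eqVneq z`_i z`_i.+1.
  by apply: leq_trans (subset_leq_card sub) _; rewrite c_eq -z_eq -sorted_pos_ge.
have i1n : (i.+1 < n)%N by lia.
have z_lt : z`_i < z`_i.+1 by rewrite lt_neqAle z_neq le_sorted_pos.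
have [j0 [k0 [G0 j0_i i_k0]]] := gaps i (introT andP (conj ui lt_iv)) z_lt.
rewrite -ltnS -c_eq; apply: leq_trans card_c; apply: proper_card; apply/properP.
split; first exact: sub.
exists j0; rewrite inE; first by rewrite c_eq (le_lt_trans j0_i).
by rewrite -leNgt; apply: next_ge G0 _; rewrite c_eq.
Qed.

Lemma twist_step_upper u v i : (u <= i <= v)%N -> (v < n)%N ->
  closed_below G x z`_v -> gaps_bridged G x u v ->
  (sorted_pos y)`_i <= rho * z`_(maxn i.-1 u) + (1 - rho) * z`_v.
Proof.
move=> /andP [ui iv] vn below gaps; set c := maxn i.-1 u; set M := _ + _.
have cv : (c <= v)%N by rewrite /c; lia.
have i_n : (i < n)%N by lia.
have c_n : (c < n)%N by lia.
have next_le j k : G j k -> x k <= z`_c -> y j <= M.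
  move=> Gjk kc; have kv := le_trans kc (le_sorted_pos x cv vn).
  have jv : x j <= z`_v by apply: below Gjk kv.
  have nbrs l : G j l -> x l <= z`_v by rewrite G_sym => /below; apply.
  have := avg_upper_bound step_ok nbrs Gjk kv.
  have : rho * x k <= rho * z`_c by rewrite ler_pM2l.
  rewrite /M; lra.
have sub : [pred j | x j <= z`_c] \subset [pred j | y j <= M].
  by apply/fintype.subsetP => j; rewrite !inE; apply: next_le (G_refl j).
have card_c : (c < #|[pred j | (x j <= z`_c)%R]|)%N by rewrite -sorted_pos_le.
rewrite sorted_pos_le ?size_sorted_pos //.
have [lt_ui|le_iu] := ltnP u i; last first.
  by apply: leq_trans (subset_leq_card sub); rewrite -(_ : c = i) //; lia.
have c_eq : i = c.+1 by rewrite /c; lia.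
have c1n : (c.+1 < n)%N by lia.
have [z_eq|z_neq] := eqVneq z`_c z`_c.+1.
  by apply: leq_trans (subset_leq_card sub); rewrite c_eq z_eq -sorted_pos_le.
have z_lt : z`_c < z`_c.+1 by rewrite lt_neqAle z_neq le_sorted_pos.
have uc_v : (u <= c < v)%N by rewrite /c; lia.
have [j0 [k0 [G0 j0_c c_k0]]] := gaps c uc_v z_lt.
rewrite c_eq; apply: leq_ltn_trans card_c _; apply: proper_card; apply/properP.
split; first exact: sub.
exists k0; rewrite inE; last by rewrite -ltNge (lt_le_trans z_lt).
by apply: (next_le k0 j0) j0_c; rewrite G_sym.
Qed.

Lemma twist_blocks_step : twist_step rho (twist_blocks G x) z (sorted_pos y).
Proof.
move=> p pB i pi; have /andP [_ vn] := twist_block_bounds G_sym pB.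
have [above below] := twist_block_closed G_sym pB.
have gaps := twist_block_gaps G_sym pB.
by split; [apply: twist_step_lower | apply: twist_step_upper].
Qed.

End TwistStep.

Unset Implicit Arguments.
Set Strict Implicit.

Theorem lemma2 (R : realType) (n m : nat) (rho : R)
  (G : nat -> rel 'I_n) (P : nat -> 'M[R]_n) (x : nat -> 'I_n -> R) :
  0 < rho <= 1 / 2 ->
  (forall t, avg_step_ok rho (G t) (P t)) ->
  (forall t i, x t.+1 i = \sum_(j < n) P t i j * x t j) ->
  (forall t, (n_comp (G t) predT <= m)%N) ->
  let z := fun t => sorted_pos (x t) in
  exists B : nat -> seq (nat * nat),
    [/\ twist_system n m rho z B,
        (forall t a b, is_block (x t) (G t) a b ->
           exists2 p, p \in B t &
             forall k, (k < n)%N -> (p.1 <= k <= p.2)%N = (a <= (z t)`_k <= b)),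
        (forall t p, p \in B t ->
           p.1 = p.2 \/
           exists a b, is_block (x t) (G t) a b /\
             forall k, (k < n)%N -> (p.1 <= k <= p.2)%N = (a <= (z t)`_k <= b)) &
        (forall s, 0 < s <= 1 -> twist_energy s z B = avg_energy s x G)].
Proof.
move=> /andP [rho_gt0 _] step_ok dyn comps z.
have G_sym t i j : G t i j = G t j i by case: (step_ok t) => -[].
exists (fun t => twist_blocks (G t) (x t)); split.
- move=> t; split; [exact: size_sorted_pos | exact: sorted_pos_sorted | split |].
  + by apply: leq_trans (comps t); apply: size_twist_blocks.
  + exact: twist_block_bounds (G_sym t).
  + exact: count_twist_blocks (G_sym t).
  + rewrite /z (_ : x t.+1 = (fun i => \sum_(j < n) P t i j * x t j)).
      exact: twist_blocks_step.
    exact: funext (dyn t).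
- move=> t a b blk; exists (block_index (x t) a b); first exact: block_index_twist_blocks.
  by case: (block_indexP (G_sym t) blk).
- move=> t p /twist_blocksP [[a [b [blk ->]]]|[p12 _ _]]; last by left.
  by right; exists a, b; split => //; case: (block_indexP (G_sym t) blk).
- move=> s /andP [s_gt0 _]; apply: eq_eseriesr => t _.
  by rewrite esum_blocks // gt_eqF.
Qed.
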